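(* Let $N$ be a connected, complete, non-orientable hyperbolic $3$-manifold of finite volume with an ideal triangulation $\Delta$, let $\hat N$ be its orientation covering with deck involution $\iota$ and lifted triangulation $\hat\Delta$. Then the map $$(z_{i,j})\in\mathrm{Def}(N,\Delta)\longmapsto\big(z_{i,j},1/\overline{z_{i,j}}\big)\in\mathrm{Def}(\hat N,\hat\Delta)^{\iota}$$ is a real analytic isomorphism onto the fixed point set of $\iota$.
   Context: $\mathrm{Def}(N,\Delta)$ is the set of edge invariants $(z_{i,j})$ of the tetrahedra of $\Delta$, in a small neighborhood of the complete-structure values, satisfying the tetrahedron relations ($z_2=1/(1-z_1)$, $z_3=(z_1-1)/z_1$, opposite edges equal) and the non-orientable compatibility equations around every edge cycle: $\prod_l z_l^{\epsilon_l}\overline{z_l}^{-(1-\epsilon_l)}=1$, $\sum_l\arg z_l=2\pi$, where $\epsilon_l=1$ or $0$ according to whether the $l$-th tetrahedron keeps or reverses orientation in a coherent orientation around the edge. $\mathrm{Def}(\hat N,\hat\Delta)$ is defined similarly for the orientable $\hat N$ (with all $\epsilon_l=1$), with coordinates $(z_{i,j},w_{i,j})$, $w_{i,j}$ the invariant of the lifted edge $\iota(e_{i,j})$; $\iota$ acts by $(z_{i,j},w_{i,j})\mapsto(1/\overline{w_{i,j}},1/\overline{z_{i,j}})$. *)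

From Stdlib Require Import Bool Reals List.
From Coquelicot Require Import Coquelicot.
Import ListNotations.
Open Scope R_scope.

Definition Arg (z : C) : R :=
  if Rle_dec 0 (Im z) then acos (Re z / Cmod z) else - acos (Re z / Cmod z).

(** Combinatorial data of an ideal triangulation Delta of N with [n]
    tetrahedra Delta_0 .. Delta_(n-1), each with a fixed orientation.
    The edge parameter z_{l,j} (j = 0,1,2) is attached to the pair of
    opposite edges of type j of Delta_l.  An edge cycle of N is a list of
    entries (l, j, eps): going once around the edge one meets tetrahedron l
    at an edge of type j, and eps = true / false according to whether
    Delta_l keeps / reverses the coherent orientation around the edge. *)
Definition entry := (nat * nat * bool)%type.
Definition ent_tet (e : entry) : nat := fst (fst e).
Definition ent_typ (e : entry) : nat := snd (fst e).
Definition ent_eps (e : entry) : bool := snd e.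

(** Well-formedness: indices in range, and every edge-type (l,j) of every
    tetrahedron (i.e. each of the 6 edges, opposite edges sharing a type)
    occurs exactly twice in the union of the edge cycles. *)
Definition valid_triangulation (n : nat) (cyc : list (list entry)) : Prop :=
  (forall c e, In c cyc -> In e c -> (ent_tet e < n)%nat /\ (ent_typ e < 3)%nat) /\
  (forall l j, (l < n)%nat -> (j < 3)%nat ->
     length (filter (fun e => andb (Nat.eqb (ent_tet e) l) (Nat.eqb (ent_typ e) j))
                    (concat cyc)) = 2%nat).

Definition coords := nat -> nat -> C.

Definition near (n : nat) (z z0 : coords) (r : R) : Prop :=
  forall l j, (l < n)%nat -> (j < 3)%nat -> Cmod (Cminus (z l j) (z0 l j)) < r.

Definition tet_rel (z : coords) (l : nat) : Prop :=
  z l 0%nat <> 0 /\ z l 0%nat <> 1 /\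
  z l 1%nat = Cinv (Cminus 1 (z l 0%nat)) /\
  z l 2%nat = Cdiv (Cminus (z l 0%nat) 1) (z l 0%nat).

(** Tetrahedron relations for a tetrahedron labelled with the reverse
    orientation (the lifts iota(Delta_l) in hat N, whose edges iota(e_{l,j})
    carry the labels w_{l,j}): the cyclic order of the labels is reversed. *)
Definition tet_rel_rev (w : coords) (l : nat) : Prop :=
  w l 0%nat <> 0 /\ w l 0%nat <> 1 /\
  w l 2%nat = Cinv (Cminus 1 (w l 0%nat)) /\
  w l 1%nat = Cdiv (Cminus (w l 0%nat) 1) (w l 0%nat).

Definition Cprod (l : list C) : C := fold_right Cmult 1 l.
Definition Rsum (l : list R) : R := fold_right Rplus 0 l.

Definition edge_eq_N (z : coords) (c : list entry) : Prop :=
  Cprod (map (fun e => if ent_eps e then z (ent_tet e) (ent_typ e)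
                       else Cinv (Cconj (z (ent_tet e) (ent_typ e)))) c) = 1 /\
  Rsum (map (fun e => Arg (z (ent_tet e) (ent_typ e))) c) = 2 * PI.

(** Orientable compatibility equations (all eps = 1) around the two lifts of
    an edge cycle c of N to hat N: the lift through Delta_l for eps_l = true
    and through iota(Delta_l) for eps_l = false, and its image under iota. *)
Definition edge_eq_or (v : entry -> C) (c : list entry) : Prop :=
  Cprod (map v c) = 1 /\ Rsum (map (fun e => Arg (v e)) c) = 2 * PI.

Definition edge_eq_hat (z w : coords) (c : list entry) : Prop :=
  edge_eq_or (fun e => if ent_eps e then z (ent_tet e) (ent_typ e)
                       else w (ent_tet e) (ent_typ e)) c /\
  edge_eq_or (fun e => if ent_eps e then w (ent_tet e) (ent_typ e)
                       else z (ent_tet e) (ent_typ e)) c.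

Definition eqs_N (n : nat) (cyc : list (list entry)) (z : coords) : Prop :=
  (forall l, (l < n)%nat -> tet_rel z l) /\ (forall c, In c cyc -> edge_eq_N z c).

Definition DefN (n : nat) (cyc : list (list entry)) (z0 : coords) (r : R)
  (z : coords) : Prop := near n z z0 r /\ eqs_N n cyc z.

Definition inv_conj (z : coords) : coords := fun l j => Cinv (Cconj (z l j)).

Definition DefHat (n : nat) (cyc : list (list entry)) (z0 : coords) (rz rw : R)
  (z w : coords) : Prop :=
  near n z z0 rz /\ near n w (inv_conj z0) rw /\
  (forall l, (l < n)%nat -> tet_rel z l /\ tet_rel_rev w l) /\
  (forall c, In c cyc -> edge_eq_hat z w c).

Definition iota_act (zw : coords * coords) : coords * coords :=
  (inv_conj (snd zw), inv_conj (fst zw)).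

Definition coords_eq (n : nat) (z z' : coords) : Prop :=
  forall l j, (l < n)%nat -> (j < 3)%nat -> z l j = z' l j.

Definition iota_fixed (n : nat) (zw : coords * coords) : Prop :=
  coords_eq n (fst (iota_act zw)) (fst zw) /\ coords_eq n (snd (iota_act zw)) (snd zw).

Definition Phi (z : coords) : coords * coords := (z, inv_conj z).

(** Hypothesis on the base point: the (complete) hyperbolic structure values,
    a solution of the equations of Def(N,Delta) with all parameters in the
    upper half plane (positively oriented ideal tetrahedra). *)
Definition hyperbolic_structure (n : nat) (cyc : list (list entry)) (z0 : coords) : Prop :=
  eqs_N n cyc z0 /\ (forall l j, (l < n)%nat -> (j < 3)%nat -> 0 < Im (z0 l j)).

From Stdlib Require Import Reals List Psatz.
From Coquelicot Require Import Coquelicot.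
Open Scope R_scope.

(* The point w = 1 / conj z is a positive real multiple of z, so it has the same
   argument, and z |-> 1 / conj z is a multiplicative involution that turns the
   tetrahedron relations into those of the reversed labelling.  Hence at
   (z, 1 / conj z) the two lifts of an edge cycle of N carry exactly the
   non-orientable edge equation and its image under the involution; conversely
   a fixed point of iota has w = 1 / conj z, and its first lift gives back the
   equations of N.  The radii come from m = min Im z0 > 0: on the disc of radius
   m / 2 around z0, 1 / conj z stays within 1 / m of 1 / conj z0. *)

Lemma Cconj_1 : Cconj 1 = 1%C.
Proof. apply injective_projections; simpl; ring. Qed.

Lemma Cconj_neq0 (a : C) : a <> 0%C -> Cconj a <> 0%C.
Proof.
  intros Ha E; apply Ha; rewrite <- (Cconj_conj a), E.
  apply injective_projections; simpl; ring.
Qed.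

Lemma Csub_neq0 (a b : C) : a <> b -> (a - b)%C <> 0%C.
Proof. intros Hab E; apply Hab; replace a with (a - b + b)%C by ring; rewrite E; ring. Qed.

Lemma Cinv_Cconj_pair (x y : R) :
  Cinv (Cconj (x, y)) = (/ (x ^ 2 + y ^ 2) * x, / (x ^ 2 + y ^ 2) * y).
Proof.
  unfold Cinv, Cconj; cbn [fst snd].
  replace ((- y) ^ 2) with (y ^ 2) by ring.
  f_equal; unfold Rdiv; ring.
Qed.

(* Coquelicot's [Cinv] sends 0 to 0, so z |-> 1 / conj z is a multiplicative
   involution of all of C and the identities below need no side conditions. *)
Lemma Cinv_Cconj_0 : Cinv (Cconj 0) = 0%C.
Proof. apply injective_projections; simpl; unfold Rdiv; ring. Qed.

Lemma Cinv_Cconj_1 : Cinv (Cconj 1) = 1%C.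
Proof. apply injective_projections; simpl; field. Qed.

Lemma Cinv_Cconj_involutive (z : C) : Cinv (Cconj (Cinv (Cconj z))) = z.
Proof.
  destruct z as [x y].
  rewrite !Cinv_Cconj_pair.
  destruct (Req_dec (x ^ 2 + y ^ 2) 0) as [N0 | N].
  - assert (x = 0 /\ y = 0) as [-> ->] by nra.
    f_equal; ring.
  - assert (N' : (/ (x ^ 2 + y ^ 2) * x) ^ 2 + (/ (x ^ 2 + y ^ 2) * y) ^ 2
                 = / (x ^ 2 + y ^ 2)) by (field; exact N).
    rewrite N', Rinv_inv.
    f_equal; field; exact N.
Qed.

Lemma Cinv_Cconj_mult (a b : C) :
  Cinv (Cconj (a * b)) = (Cinv (Cconj a) * Cinv (Cconj b))%C.
Proof.
  destruct (Req_dec (Cmod a) 0) as [Ha | Ha].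
  { apply Cmod_eq_0 in Ha; subst a.
    rewrite Cmult_0_l, Cinv_Cconj_0; ring. }
  destruct (Req_dec (Cmod b) 0) as [Hb | Hb].
  { apply Cmod_eq_0 in Hb; subst b.
    rewrite Cmult_0_r, Cinv_Cconj_0; ring. }
  assert (Ha' : Cconj a <> 0%C)
    by (intro E; apply Ha; rewrite <- Cmod_conj, E; apply Cmod_0).
  assert (Hb' : Cconj b <> 0%C)
    by (intro E; apply Hb; rewrite <- Cmod_conj, E; apply Cmod_0).
  rewrite Cmult_conj; field; split; assumption.
Qed.

Lemma Cprod_map_Cinv_Cconj (l : list C) :
  Cprod (map (fun z => Cinv (Cconj z)) l) = Cinv (Cconj (Cprod l)).
Proof.
  induction l as [|a l IH]; simpl.
  - symmetry; apply Cinv_Cconj_1.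
  - unfold Cprod in *; rewrite IH, Cinv_Cconj_mult; reflexivity.
Qed.

Lemma Arg_scal (k x y : R) : 0 < k -> Arg (k * x, k * y) = Arg (x, y).
Proof.
  intros Hk; unfold Arg, Cmod, Re, Im; cbn [fst snd].
  replace ((k * x) ^ 2 + (k * y) ^ 2) with (k ^ 2 * (x ^ 2 + y ^ 2)) by ring.
  rewrite sqrt_mult, sqrt_pow2 by nra.
  replace (k * x / (k * sqrt (x ^ 2 + y ^ 2))) with (x / sqrt (x ^ 2 + y ^ 2)).
  - destruct (Rle_dec 0 (k * y)), (Rle_dec 0 y); try reflexivity; nra.
  - destruct (Req_dec (sqrt (x ^ 2 + y ^ 2)) 0) as [S0 | S].
    + rewrite S0, Rmult_0_r, !Rdiv_0_r; reflexivity.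
    + field; lra.
Qed.

Lemma Arg_Cinv_Cconj (z : C) : Arg (Cinv (Cconj z)) = Arg z.
Proof.
  destruct z as [x y]; rewrite Cinv_Cconj_pair.
  destruct (Req_dec (x ^ 2 + y ^ 2) 0) as [N0 | N].
  - assert (x = 0 /\ y = 0) as [-> ->] by nra.
    rewrite Rmult_0_r; reflexivity.
  - apply Arg_scal, Rinv_0_lt_compat; nra.
Qed.

Lemma tet_rel_rev_inv_conj (z : coords) (l : nat) :
  tet_rel z l -> tet_rel_rev (inv_conj z) l.
Proof.
  unfold tet_rel, tet_rel_rev, inv_conj.
  intros (H0 & H1 & -> & ->).
  set (a := z l 0%nat) in *.
  assert (Ca0 : Cconj a <> 0%C) by (apply Cconj_neq0; exact H0).
  assert (Ca1 : Cconj a <> 1%C)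
    by (intro E; apply H1; rewrite <- (Cconj_conj a), E; apply Cconj_1).
  assert (Da : (1 - a)%C <> 0%C) by (apply Csub_neq0; auto).
  assert (Dca : (Cconj a - 1)%C <> 0%C) by (apply Csub_neq0; exact Ca1).
  assert (Dca' : (1 - Cconj a)%C <> 0%C) by (apply Csub_neq0; auto).
  split; [| split; [| split]].
  - intro E; apply H0; rewrite <- (Cinv_Cconj_involutive a), E; apply Cinv_Cconj_0.
  - intro E; apply H1; rewrite <- (Cinv_Cconj_involutive a), E; apply Cinv_Cconj_1.
  - rewrite Cdiv_conj, Cminus_conj, Cconj_1 by exact H0.
    field; auto.
  - rewrite Cinv_conj, Cminus_conj, Cconj_1 by exact Da.
    field; auto.
Qed.

(* The parameter at the lift of an edge-cycle entry through Delta_l (eps = true)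
   or iota(Delta_l) (eps = false), at the point (z, 1 / conj z). *)
Definition lift_param (z : coords) (e : entry) : C :=
  if ent_eps e then z (ent_tet e) (ent_typ e) else Cinv (Cconj (z (ent_tet e) (ent_typ e))).

Lemma edge_eq_or_ext (v v' : entry -> C) (c : list entry) :
  (forall e, In e c -> v e = v' e) -> edge_eq_or v c -> edge_eq_or v' c.
Proof.
  intros Hv [P A]; unfold edge_eq_or.
  rewrite <- (map_ext_in _ _ _ Hv).
  rewrite <- (map_ext_in (fun e => Arg (v e)) (fun e => Arg (v' e)) c)
    by (intros e He; rewrite Hv by exact He; reflexivity).
  split; assumption.
Qed.

Lemma edge_eq_N_iff (z : coords) (c : list entry) :
  edge_eq_N z c <-> edge_eq_or (lift_param z) c.
Proof.
  assert (Args : map (fun e => Arg (z (ent_tet e) (ent_typ e))) c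
                 = map (fun e => Arg (lift_param z e)) c).
  { apply map_ext; intro e; unfold lift_param.
    destruct (ent_eps e); [reflexivity | symmetry; apply Arg_Cinv_Cconj]. }
  unfold edge_eq_N, edge_eq_or; rewrite Args; reflexivity.
Qed.

Lemma edge_eq_or_Cinv_Cconj (v : entry -> C) (c : list entry) :
  edge_eq_or v c -> edge_eq_or (fun e => Cinv (Cconj (v e))) c.
Proof.
  intros [P A]; split.
  - rewrite <- (map_map v (fun z => Cinv (Cconj z))), Cprod_map_Cinv_Cconj, P.
    apply Cinv_Cconj_1.
  - rewrite <- A; f_equal; apply map_ext; intro e; apply Arg_Cinv_Cconj.
Qed.

Lemma edge_eq_hat_inv_conj (z : coords) (c : list entry) :
  edge_eq_N z c -> edge_eq_hat z (inv_conj z) c.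
Proof.
  intros H%edge_eq_N_iff; split; [exact H |].
  apply edge_eq_or_ext with (fun e => Cinv (Cconj (lift_param z e))).
  - intros e _; unfold lift_param, inv_conj.
    destruct (ent_eps e); [reflexivity | apply Cinv_Cconj_involutive].
  - apply edge_eq_or_Cinv_Cconj; exact H.
Qed.

Lemma edge_eq_N_of_hat (z w : coords) (c : list entry) :
  (forall e, In e c -> w (ent_tet e) (ent_typ e) = inv_conj z (ent_tet e) (ent_typ e)) ->
  edge_eq_hat z w c -> edge_eq_N z c.
Proof.
  intros Hw [H _]; apply edge_eq_N_iff; revert H.
  apply edge_eq_or_ext; intros e He; unfold lift_param.
  destruct (ent_eps e); [reflexivity | apply Hw; exact He].
Qed.

Lemma Im_le_Cmod (z : C) : Im z <= Cmod z.
Proof.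
  eapply Rle_trans; [apply Rle_abs | eapply Rle_trans; [apply Rmax_r | apply Rmax_Cmod]].
Qed.

Lemma Im_gt_of_Cmod_sub_lt (z z0 : C) (d : R) : Cmod (z - z0) < d -> Im z0 - d < Im z.
Proof.
  intros Hd.
  assert (Hi : Im (z0 - z) = Im z0 - Im z) by (destruct z, z0; simpl; ring).
  assert (Hm : Cmod (z0 - z) = Cmod (z - z0))
    by (rewrite <- Cmod_opp; f_equal; ring).
  pose proof (Im_le_Cmod (z0 - z)); lra.
Qed.

Lemma Cmod_Cinv_Cconj_sub (z z0 : C) : z <> 0%C -> z0 <> 0%C ->
  Cmod (Cinv (Cconj z) - Cinv (Cconj z0)) = Cmod (z - z0) / (Cmod z * Cmod z0).
Proof.
  intros Hz Hz0.
  assert (Hzz0 : (z * z0)%C <> 0%C)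
    by (apply Cmod_gt_0; rewrite Cmod_mult; apply Rmult_lt_0_compat; apply Cmod_gt_0; assumption).
  replace (Cinv (Cconj z) - Cinv (Cconj z0))%C with (Cconj ((z0 - z) / (z * z0))).
  - rewrite Cmod_conj, Cmod_div, Cmod_mult by exact Hzz0.
    f_equal; rewrite <- Cmod_opp; f_equal; ring.
  - rewrite Cdiv_conj, Cminus_conj, Cmult_conj by exact Hzz0.
    field; split; apply Cconj_neq0; assumption.
Qed.

Lemma Cmod_Cinv_Cconj_sub_lt (m : R) (z z0 : C) :
  0 < m -> m <= Im z0 -> Cmod (z - z0) < m / 2 ->
  Cmod (Cinv (Cconj z) - Cinv (Cconj z0)) < 1 / m.
Proof.
  intros Hm Hz0 Hd.
  pose proof (Im_gt_of_Cmod_sub_lt z z0 _ Hd) as Hz.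
  pose proof (Im_le_Cmod z); pose proof (Im_le_Cmod z0).
  rewrite Cmod_Cinv_Cconj_sub by (apply Cmod_gt_0; lra).
  apply Rlt_div_l; [nra |].
  apply Rlt_le_trans with (m / 2); [exact Hd |].
  replace (m / 2) with (1 / m * (m / 2 * m)) by (field; lra).
  apply Rmult_le_compat_l; [apply Rlt_le, Rdiv_lt_0_compat; lra | nra].
Qed.

Lemma finite_pos_lower_bound (f : nat -> R) (n : nat) :
  (forall i, (i < n)%nat -> 0 < f i) ->
  exists m, 0 < m /\ forall i, (i < n)%nat -> m <= f i.
Proof.
  induction n as [|n IH]; intros Hf.
  - exists 1; split; [lra | intros i Hi; lia].
  - destruct IH as (m & Hm & Hb); [intros i Hi; apply Hf; lia |].
    exists (Rmin m (f n)); split.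
    + apply Rmin_pos; [exact Hm | apply Hf; lia].
    + intros i Hi; destruct (Nat.eq_dec i n) as [-> | Hne].
      * apply Rmin_r.
      * eapply Rle_trans; [apply Rmin_l | apply Hb; lia].
Qed.

Lemma finite_pos_lower_bound2 (f : nat -> nat -> R) (n k : nat) :
  (forall i j, (i < n)%nat -> (j < k)%nat -> 0 < f i j) ->
  exists m, 0 < m /\ forall i j, (i < n)%nat -> (j < k)%nat -> m <= f i j.
Proof.
  induction n as [|n IH]; intros Hf.
  - exists 1; split; [lra | intros i j Hi; lia].
  - destruct IH as (m & Hm & Hb); [intros i j Hi; apply Hf; lia |].
    destruct (finite_pos_lower_bound (f n) k) as (m' & Hm' & Hb'); [intros j; apply Hf; lia |].
    exists (Rmin m m'); split; [apply Rmin_pos; assumption |].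
    intros i j Hi Hj; destruct (Nat.eq_dec i n) as [-> | Hne].
    + eapply Rle_trans; [apply Rmin_r | apply Hb'; exact Hj].
    + eapply Rle_trans; [apply Rmin_l | apply Hb; lia].
Qed.

Lemma iota_fixed_Phi (n : nat) (z : coords) : iota_fixed n (Phi z).
Proof.
  split; intros l j _ _; simpl; unfold inv_conj; [apply Cinv_Cconj_involutive | reflexivity].
Qed.

Lemma DefHat_Phi (n : nat) (cyc : list (list entry)) (z0 : coords) (m : R) (z : coords) :
  0 < m -> (forall l j, (l < n)%nat -> (j < 3)%nat -> m <= Im (z0 l j)) ->
  DefN n cyc z0 (m / 2) z -> DefHat n cyc z0 (m / 2) (1 / m) z (inv_conj z).
Proof.
  intros Hm Hz0 (Hnear & Htet & Hedge).
  split; [exact Hnear | split; [| split]].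
  - intros l j Hl Hj; apply Cmod_Cinv_Cconj_sub_lt; auto.
  - intros l Hl; split; [| apply tet_rel_rev_inv_conj]; apply Htet; exact Hl.
  - intros c Hc; apply edge_eq_hat_inv_conj, Hedge; exact Hc.
Qed.

Lemma DefN_of_DefHat_fixed (n : nat) (cyc : list (list entry)) (z0 : coords) (rz rw : R)
  (z w : coords) :
  (forall c e, In c cyc -> In e c -> (ent_tet e < n)%nat /\ (ent_typ e < 3)%nat) ->
  DefHat n cyc z0 rz rw z w -> iota_fixed n (z, w) ->
  DefN n cyc z0 rz z /\ coords_eq n w (inv_conj z).
Proof.
  intros Hrange (Hnear & _ & Htet & Hedge) (_ & Hw).
  assert (Hw' : coords_eq n w (inv_conj z))
    by (intros l j Hl Hj; symmetry; apply Hw; assumption).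
  split; [split; [exact Hnear | split] | exact Hw'].
  - intros l Hl; apply Htet; exact Hl.
  - intros c Hc; apply edge_eq_N_of_hat with w; [| apply Hedge; exact Hc].
    intros e He; destruct (Hrange c e Hc He); apply Hw'; assumption.
Qed.

Theorem corollary2p7 (n : nat) (cyc : list (list entry)) (z0 : coords) :
  (0 < n)%nat ->
  valid_triangulation n cyc ->
  hyperbolic_structure n cyc z0 ->
  exists r rz rw : R, 0 < r /\ 0 < rz /\ 0 < rw /\
    (* Phi maps Def(N,Delta) into the iota-fixed part of Def(hat N, hat Delta) *)
    (forall z, DefN n cyc z0 r z ->
       DefHat n cyc z0 rz rw (fst (Phi z)) (snd (Phi z)) /\ iota_fixed n (Phi z)) /\
    (* ... onto it: every fixed point is Phi z for some z in Def(N,Delta);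
       its (real analytic) inverse is the projection (z,w) |-> z *)
    (forall z w, DefHat n cyc z0 rz rw z w -> iota_fixed n (z, w) ->
       DefN n cyc z0 r z /\ coords_eq n w (snd (Phi z))) /\
    (* injectivity *)
    (forall z z', DefN n cyc z0 r z -> DefN n cyc z0 r z' ->
       coords_eq n (fst (Phi z)) (fst (Phi z')) /\
       coords_eq n (snd (Phi z)) (snd (Phi z')) -> coords_eq n z z').
Proof.
  intros _ [Hrange _] [_ Hpos].
  destruct (finite_pos_lower_bound2 (fun l j => Im (z0 l j)) n 3 Hpos) as (m & Hm & Hz0).
  exists (m / 2), (m / 2), (1 / m).
  split; [lra | split; [lra | split; [apply Rdiv_lt_0_compat; lra | split; [| split]]]].
  - intros z Hz; split; [apply DefHat_Phi | apply iota_fixed_Phi]; assumption.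
  - intros z w Hzw Hfix; exact (DefN_of_DefHat_fixed _ _ _ _ _ _ _ Hrange Hzw Hfix).
  - intros z z' _ _ [Hzz' _]; exact Hzz'.
Qed.
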